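(* If the bornological \(V\)-module \(M\) is complete, then so is \(M'\).
   Context: Let \(V\) be a complete discrete valuation ring with uniformiser \(\pi\). A bornology on a set is a collection of subsets (called bounded) containing all finite subsets and closed under finite unions and under taking subsets. A bornological \(V\)-module is a \(V\)-module \(M\) with a bornology such that every bounded subset is contained in a bounded \(V\)-submodule. It is complete if every bounded subset is contained in a bounded \(V\)-submodule which is \(\pi\)-adically complete. A subset \(S\subseteq M\) is compactoid if there is a bounded \(V\)-submodule \(T\subseteq M\) with \(S\subseteq T\) such that for every \(n\in\mathbb N\) there is a finite set \(F_n\subseteq T\) with \(S\subseteq VF_n+\pi^nT\). \(M'\) denotes \(M\) with the bornology consisting of the compactoid subsets. *)

From HB Require Import structures.
From mathcomp Require Import all_boot all_order all_algebra.
From mathcomp Require Import all_classical.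
Set Implicit Arguments. Unset Strict Implicit. Unset Printing Implicit Defensive.
Import GRing.Theory.
Local Open Scope ring_scope.
Local Open Scope classical_set_scope.

Section Defs.
Variables (V : idomainType) (M : lmodType V).

Definition pimul (p : V) (n : nat) (T : set M) : set M :=
  [set x | exists2 t, T t & x = p ^+ n *: t].

Definition submodule (T : set M) : Prop :=
  T 0 /\ (forall x y, T x -> T y -> T (x + y)) /\ (forall (a : V) x, T x -> T (a *: x)).

(** T is pi-adically complete: separated and complete for the pi-adic filtration
    (pi^n T)_n, i.e. T -> lim T / pi^n T is bijective. *)
Definition pi_adically_complete (p : V) (T : set M) : Prop :=
  (forall x, (forall n, pimul p n T x) -> x = 0) /\
  (forall u : nat -> M, (forall n, T (u n)) ->
     (forall n, pimul p n T (u n.+1 - u n)) ->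
     exists2 x, T x & forall n, pimul p n T (x - u n)).

Definition bornology (B : set (set M)) : Prop :=
  (forall S : set M, finite_set S -> B S) /\
  (forall S1 S2, B S1 -> B S2 -> B (S1 `|` S2)) /\
  (forall S1 S2 : set M, S1 `<=` S2 -> B S2 -> B S1).

Definition bornological_module (B : set (set M)) : Prop :=
  bornology B /\
  (forall S, B S -> exists T, [/\ submodule T, B T & S `<=` T]).

Definition complete_bornological_module (p : V) (B : set (set M)) : Prop :=
  bornological_module B /\
  (forall S, B S -> exists T,
     [/\ submodule T, B T, pi_adically_complete p T & S `<=` T]).

Definition vspan (F : seq M) : set M :=
  [set x | exists a : nat -> V, x = \sum_(i < size F) a i *: F`_i].

Definition compactoid (p : V) (B : set (set M)) (S : set M) : Prop :=
  exists T, [/\ submodule T, B T, S `<=` T &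
    forall n : nat, exists F : seq M, {subset F <= T} /\
      S `<=` [set z | exists x y, [/\ vspan F x, pimul p n T y & z = x + y]]].

End Defs.

Definition complete_dvr_uniformiser (V : idomainType) (p : V) : Prop :=
  [/\ p != 0, p \isn't a GRing.unit,
      (forall x : V, x != 0 -> exists n (u : V), u \is a GRing.unit /\ x = u * p ^+ n)
    & @pi_adically_complete V V^o p setT].

From HB Require Import structures.
From mathcomp Require Import all_boot all_order all_algebra.
From mathcomp Require Import all_classical.
From mathcomp Require Import finmap.
Set Implicit Arguments. Unset Strict Implicit. Unset Printing Implicit Defensive.
Import GRing.Theory.
Local Open Scope ring_scope.
Local Open Scope classical_set_scope.

(** Let S be compactoid, witnessed by a bounded submodule T and finite families
    F_n with S ⊆ V F_n + π^n T.  Enlarge T to a bounded π-adically complete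
    submodule T0 and put C := T0 ∩ ⋂_n (V F_n + π^n T0).  Then C is a
    compactoid submodule containing S, and it is closed in T0 for the π-adic
    topology of T0.  A closed submodule C of a π-adically complete T0 is
    complete for its own filtration (π^n C): the limit x in T0 of a π^n C-Cauchy
    sequence u lies in C, and x - u_k ∈ π^k C because the rescaled tails
    π^-k (u_(k+i) - u_k) form a Cauchy sequence of C whose limit, again in C,
    is π^-k (x - u_k). *)

Section Submodules.
Variables (V : idomainType) (M : lmodType V).
Implicit Types (A B T C : set M) (F G : seq M).

(* Written exactly as the set [V F + π^n T] in [compactoid], so the two are convertible. *)
Definition sumset A B : set M := [set z | exists x y, [/\ A x, B y & z = x + y]].

Lemma submoduleB T x y : submodule T -> T x -> T y -> T (x - y).
Proof. by move=> [_ [TD TZ]] Tx Ty; apply: TD => //; rewrite -scaleN1r; apply: TZ. Qed.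

Lemma submodule_sum T (I : Type) (r : seq I) (P : pred I) (f : I -> M) :
  submodule T -> (forall i, P i -> T (f i)) -> T (\sum_(i <- r | P i) f i).
Proof. by move=> [T0 [TD _]] Tf; elim/big_ind: _. Qed.

Lemma submoduleI T C : submodule T -> submodule C -> submodule (T `&` C).
Proof.
move=> [T0 [TD TZ]] [C0 [CD CZ]]; split=> //.
by split=> [x y [Tx Cx] [Ty Cy] | a x [Tx Cx]]; split; auto.
Qed.

Lemma submodule_bigcap (J : Type) (T_ : J -> set M) :
  (forall i, submodule (T_ i)) -> submodule (\bigcap_i T_ i).
Proof.
move=> HT; split; first by move=> i _; exact: (HT i).1.
split=> [x y Tx Ty | a x Tx] i _; first exact: (HT i).2.1 _ _ (Tx i I) (Ty i I).
exact: (HT i).2.2 _ _ (Tx i I).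
Qed.

Lemma submodule_sumset A B : submodule A -> submodule B -> submodule (sumset A B).
Proof.
move=> [A0 [AD AZ]] [B0 [BD BZ]]; split; first by exists 0, 0; rewrite addr0.
split=> [_ _ [a [b [Aa Bb ->]]] [a' [b' [Aa' Bb' ->]]] | c _ [a [b [Aa Bb ->]]]].
  by exists (a + a'), (b + b'); split; auto; rewrite addrACA.
by exists (c *: a), (c *: b); split; auto; rewrite scalerDr.
Qed.

Lemma sumsetS A A' B B' : A `<=` A' -> B `<=` B' -> sumset A B `<=` sumset A' B'.
Proof. by move=> AA' BB' _ [a [b [Aa Bb ->]]]; exists a, b; split; auto. Qed.

Lemma submodule_vspan F : submodule (vspan F).
Proof.
split; first by exists (fun=> 0); rewrite big1 // => i _; rewrite scale0r.
split=> [_ _ [a ->] [b ->] | c _ [a ->]].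
  exists (fun i => a i + b i); rewrite -big_split.
  by apply: eq_bigr => i _; rewrite scalerDl.
exists (fun i => c * a i); rewrite scaler_sumr.
by apply: eq_bigr => i _; rewrite scalerA.
Qed.

Lemma vspan_mem F x : x \in F -> vspan F x.
Proof.
move=> xF; have xFi : (index x F < size F)%N by rewrite index_mem.
exists (fun i => (i == index x F)%:R).
rewrite (bigD1 (Ordinal xFi)) //= eqxx scale1r nth_index // big1 ?addr0 // => i.
by rewrite -val_eqE /= => /negbTE ->; rewrite scale0r.
Qed.

Lemma vspan_subset F G : {subset F <= G} -> vspan F `<=` vspan G.
Proof.
move=> FG _ [a ->]; apply: submodule_sum (submodule_vspan G) _ => i _.
by apply: (submodule_vspan G).2.2; apply/vspan_mem/FG/mem_nth.
Qed.

Variable p : V.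

Lemma submodule_pimul n T : submodule T -> submodule (pimul p n T).
Proof.
move=> [T0 [TD TZ]]; split; first by exists 0; rewrite ?scaler0.
split=> [_ _ [t Tt ->] [s Ts ->] | a _ [t Tt ->]].
  by exists (t + s); [exact: TD | rewrite scalerDr].
by exists (a *: t); [exact: TZ | rewrite !scalerA mulrC].
Qed.

Lemma pimulS n T C : T `<=` C -> pimul p n T `<=` pimul p n C.
Proof. by move=> TC x [t Tt ->]; exists t; auto. Qed.

Definition pi_adically_closed_in T0 C : Prop :=
  forall x, T0 x -> (forall n, exists2 c, C c & pimul p n T0 (x - c)) -> C x.

Section ClosedSubmodule.
Variables (T0 C : set M).
Hypotheses (T0sub : submodule T0) (Csub : submodule C) (CT0 : C `<=` T0).
Hypotheses (T0c : pi_adically_complete p T0) (Cclosed : pi_adically_closed_in T0 C).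

Lemma pi_adically_closed_limit (u s : nat -> M) x :
  (forall m, C (s m)) -> (forall m, u m.+1 - u m = p ^+ m *: s m) ->
  (forall n, pimul p n T0 (x - u n)) ->
  forall k, pimul p k C (x - u k).
Proof.
move=> Cs Es Hx k; have [sep0 comp0] := T0c.
pose w i := \sum_(j < i) p ^+ j *: s (k + j)%N.
have Cw i : C (w i) by apply: submodule_sum => // j _; exact: Csub.2.2.
have Ew i : p ^+ k *: w i = u (k + i)%N - u k.
  elim: i => [|i IH]; first by rewrite /w big_ord0 scaler0 addn0 subrr.
  rewrite /w big_ord_recr /= scalerDr -/(w i) IH scalerA -exprD addnS -Es.
  by rewrite addrC addrA subrK.
have Hw i : pimul p i T0 (w i.+1 - w i).
  exists (s (k + i)%N); first exact: CT0.
  by rewrite /w big_ord_recr /= addrAC subrr add0r.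
have [t T0t Ht] := comp0 w (fun i => CT0 (Cw i)) Hw.
exists t; first by apply: Cclosed => // i; exists (w i).
apply/eqP; rewrite -subr_eq0; apply/eqP; apply: sep0 => i.
have [a T0a Ea] := Hx (k + i)%N; have [b T0b Eb] := Ht i.
exists (p ^+ k *: a - p ^+ k *: b).
  exact: submoduleB T0sub (T0sub.2.2 _ _ T0a) (T0sub.2.2 _ _ T0b).
rewrite scalerBr !scalerA -exprD addnC -Ea exprD -scalerA -Eb scalerBr Ew.
by rewrite opprB !addrA subrK.
Qed.

Lemma pi_adically_complete_closed : pi_adically_complete p C.
Proof.
have [sep0 comp0] := T0c; split.
  by move=> x Hx; apply: sep0 => n; exact: pimulS CT0 _ (Hx n).
move=> u Cu Hu.
have [x T0x Hx] := comp0 u (fun n => CT0 (Cu n)) (fun n => pimulS CT0 (Hu n)).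
have /choice [s Hs] : forall m, exists s, C s /\ u m.+1 - u m = p ^+ m *: s.
  by move=> m; have [s Cs Es] := Hu m; exists s.
exists x; first by apply: Cclosed => // n; exists (u n).
by apply: (pi_adically_closed_limit (s := s)) => // m; have [] := Hs m.
Qed.

End ClosedSubmodule.

Lemma pi_adically_closed_sumset_pimul T0 (A : nat -> set M) :
  submodule T0 ->
  pi_adically_closed_in T0 (T0 `&` \bigcap_n sumset (A n) (pimul p n T0)).
Proof.
move=> T0sub x T0x Hx; split => // n _.
have [c [_ Cc] [t T0t Et]] := Hx n; have [a [b [Aa Bb Ec]]] := Cc n I.
exists a, (b + p ^+ n *: t); split => //.
  by apply: (submodule_pimul n T0sub).2.1 => //; exists t.
by rewrite addrA -Ec -Et addrC subrK.
Qed.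

End Submodules.

Section Compactoid.
Variables (V : idomainType) (p : V) (M : lmodType V) (B : set (set M)).

Lemma sub_compactoid S1 S2 :
  S1 `<=` S2 -> compactoid p B S2 -> compactoid p B S1.
Proof.
move=> S12 [T [Tsub BT ST HF]]; exists T; split => // [x /S12 /ST // | n].
by have [F [FT SF]] := HF n; exists F; split => // x /S12 /SF.
Qed.

Hypothesis HB : bornological_module B.

Lemma compactoid_finite S : finite_set S -> compactoid p B S.
Proof.
have [[Bfin _] Bmod] := HB.
move=> Sfin; have [X SX] := finite_fsetP.1 Sfin.
have [T [Tsub BT ST]] := Bmod S (Bfin S Sfin).
exists T; split => // n; exists X; split.
  by move=> x xX; rewrite in_setE; apply: ST; rewrite SX.
move=> x Sx; exists x, 0; split; last by rewrite addr0.
  by apply: vspan_mem; move: Sx; rewrite SX.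
by exists 0; [exact: Tsub.1 | rewrite scaler0].
Qed.

Lemma compactoid_setU S1 S2 :
  compactoid p B S1 -> compactoid p B S2 -> compactoid p B (S1 `|` S2).
Proof.
have [[_ [BU _]] Bmod] := HB.
move=> [T1 [_ BT1 ST1 H1]] [T2 [_ BT2 ST2 H2]].
have [T [Tsub BT T12]] := Bmod _ (BU _ _ BT1 BT2).
have T1T : T1 `<=` T by move=> x ?; apply: T12; left.
have T2T : T2 `<=` T by move=> x ?; apply: T12; right.
exists T; split => // [x [/ST1/T1T | /ST2/T2T] // | n].
have [F1 [F1T SF1]] := H1 n; have [F2 [F2T SF2]] := H2 n.
exists (F1 ++ F2); split.
  move=> x; rewrite mem_cat => /orP [/F1T | /F2T]; rewrite !in_setE;
    [exact: T1T | exact: T2T].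
have F12 : vspan F1 `<=` vspan (F1 ++ F2).
  by apply: vspan_subset => y; rewrite mem_cat => ->.
have F21 : vspan F2 `<=` vspan (F1 ++ F2).
  by apply: vspan_subset => y; rewrite mem_cat orbC => ->.
move=> x [/SF1 | /SF2].
  exact: sumsetS F12 (pimulS T1T) x.
exact: sumsetS F21 (pimulS T2T) x.
Qed.

Lemma bornology_compactoid : bornology (compactoid p B).
Proof.
split; first exact: compactoid_finite.
by split; [exact: compactoid_setU | exact: sub_compactoid].
Qed.

End Compactoid.

Lemma compactoid_complete_hull (V : idomainType) (p : V) (M : lmodType V)
    (B : set (set M)) S :
  complete_bornological_module p B -> compactoid p B S ->
  exists T, [/\ submodule T, compactoid p B T, pi_adically_complete p T & S `<=` T].
Proof.
move=> [_ Bcomp] [T [_ BT ST HF]].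
have [T0 [T0sub BT0 T0c TT0]] := Bcomp T BT.
have [F HFn] := choice HF.
pose C := T0 `&` \bigcap_n sumset (vspan (F n)) (pimul p n T0).
have Csub : submodule C.
  apply: (submoduleI T0sub (submodule_bigcap _)) => n.
  exact: submodule_sumset (submodule_vspan _) (submodule_pimul _ _ T0sub).
exists C; split => //.
- exists T0; split => // [z [] // | n]; exists (F n); split => [x xF | z [_ Cz]].
    by have /(_ x xF) := (HFn n).1; rewrite !in_setE; exact: TT0.
  exact: Cz n I.
- apply: (pi_adically_complete_closed T0sub Csub) => //; first by move=> z [].
  exact: pi_adically_closed_sumset_pimul.
- move=> x Sx; split; first exact: TT0 (ST _ Sx).
  move=> n _; have Wx := (HFn n).2 x Sx.
  exact: sumsetS (@subset_refl _ _) (pimulS TT0) _ Wx.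
Qed.

Theorem lemma4p1 (V : idomainType) (p : V) (M : lmodType V) (B : set (set M)) :
  complete_dvr_uniformiser p ->
  complete_bornological_module p B ->
  complete_bornological_module p (compactoid p B).
Proof.
move=> _ HB; have [HBm _] := HB.
split; [split; first exact: bornology_compactoid HBm|];
  by move=> S /(compactoid_complete_hull HB) [T [? ? ? ?]]; exists T.
Qed.
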